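(* Let $\mathbf{z} = \{z(i_1i_2i_3)\}_{(i_1,i_2,i_3)\in\{0,1\}^3} \in \mathbb{Z}^8$ satisfy, for some $(i_1,i_2,i_3) \in \{0,1\}^3$, one of the following: (1) $z(i_1i_2i_3),\ z(i_1^*i_2i_3),\ z(i_1^*i_2^*i_3),\ z(i_1^*i_2i_3^* )$ are all $>0$; (2) $z(i_1i_2i_3),\ z(i_1i_2^*i_3),\ z(i_1^*i_2^*i_3),\ z(i_1i_2^*i_3^* )$ are all $>0$; (3) $z(i_1i_2i_3),\ z(i_1i_2i_3^* ),\ z(i_1^*i_2i_3^* ),\ z(i_1i_2^*i_3^* )$ are all $>0$. Then $\mathbf{z}$ is not a move for $M'$, i.e. $M'\mathbf{z} \neq \mathbf{0}$.
   Context: Here $p = 4$. For $a \in \{0,1\}$, $a^* = 1-a$. The $8 \times 5$ model matrix $M$ has one row for each cell $(i_1,i_2,i_3) \in \{0,1\}^3$, equal to $\big(1, (-1)^{i_1}, (-1)^{i_2}, (-1)^{i_3}, (-1)^{i_1+i_2+i_3}\big)$ (the main effect model of the $2^{4-1}$ design with defining relation $ABCD = I$). Equivalently, $M'\mathbf{z} = \mathbf{0}$ iff for each $m \in \{1,2,3\}$ and $a \in \{0,1\}$, $\sum_{i_m = a} z(i_1i_2i_3) = 0$, and the sums of $z$ over cells with $i_1+i_2+i_3$ even and over cells with $i_1+i_2+i_3$ odd are both $0$. *)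

From mathcomp Require Import all_boot all_order all_algebra.
Set Implicit Arguments. Unset Strict Implicit. Unset Printing Implicit Defensive.
Import GRing.Theory Num.Theory.
Local Open Scope ring_scope.

(* A cell (i1,i2,i3) in {0,1}^3, each coordinate encoded as a bool (false = 0, true = 1). *)
Definition cell := (bool * bool * bool)%type.

Definition star (a : bool) : bool := ~~ a.

Definition sgn (a : bool) : int := if a then -1 else 1.

Definition M (c : cell) (k : 'I_5) : int :=
  let: (i1, i2, i3) := c in
  match val k with
  | 0 => 1
  | 1 => sgn i1
  | 2 => sgn i2
  | 3 => sgn i3
  | _ => sgn (i1 (+) i2 (+) i3)
  end.

Definition Mtz (z : cell -> int) : 'cV[int]_5 :=
  \col_(k < 5) \sum_(c : cell) M c k * z c.

Definition is_move (z : cell -> int) : Prop := Mtz z = 0.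

From mathcomp Require Import all_boot all_order all_algebra.
From mathcomp Require Import zify.
Import GRing.Theory Num.Theory.
Local Open Scope ring_scope.

(* Each of the three four-cell patterns has an indicator vector in the column
   space of M, so the entries of any move sum to zero over such a pattern; four
   positive entries cannot.  For pattern (1) at (0,0,0), for instance, twice the
   pattern sum is the even-parity sum plus the [i2 = 0] and [i3 = 0] slice sums
   minus the [i1 = 0] slice sum. *)

Lemma sum_cell (F : cell -> int) :
  \sum_(c : cell) F c = F (true,true,true) + F (true,true,false)
   + F (true,false,true) + F (true,false,false) + F (false,true,true)
   + F (false,true,false) + F (false,false,true) + F (false,false,false).
Proof.
have -> : \sum_(c : cell) F c = \sum_(a : bool * bool) \sum_(b : bool) F (a, b).
  by rewrite [RHS]pair_big /=; apply: eq_bigr; case.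
have -> : \sum_(a : bool * bool) \sum_(b : bool) F (a, b) =
   \sum_(a : bool) \sum_(a' : bool) \sum_(b : bool) F (a, a', b).
  by rewrite [RHS]pair_big /=; apply: eq_bigr; case.
by rewrite !big_bool /= !addrA.
Qed.

Lemma move_column_sum (z : cell -> int) (k : 'I_5) :
  is_move z -> \sum_(c : cell) M c k * z c = 0.
Proof. by move=> zM; have := congr1 (fun A : 'cV[int]_5 => A k 0) zM; rewrite !mxE. Qed.

Lemma move_pattern_sums (z : cell -> int) (i1 i2 i3 : bool) : is_move z ->
  [/\ z (i1, i2, i3) + z (star i1, i2, i3)
        + z (star i1, star i2, i3) + z (star i1, i2, star i3) = 0,
      z (i1, i2, i3) + z (i1, star i2, i3)
        + z (star i1, star i2, i3) + z (i1, star i2, star i3) = 0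
    & z (i1, i2, i3) + z (i1, i2, star i3)
        + z (star i1, i2, star i3) + z (i1, star i2, star i3) = 0].
Proof.
move=> zM.
have := move_column_sum z (@Ordinal 5 0 isT) zM.
have := move_column_sum z (@Ordinal 5 1 isT) zM.
have := move_column_sum z (@Ordinal 5 2 isT) zM.
have := move_column_sum z (@Ordinal 5 3 isT) zM.
have := move_column_sum z (@Ordinal 5 4 isT) zM.
rewrite !sum_cell /M /sgn /= ?mul1r ?mulN1r.
by case: i1; case: i2; case: i3; rewrite /star /=; split; lia.
Qed.

Theorem lemma1 (z : cell -> int) :
  (exists i1 i2 i3 : bool,
     [/\ 0 < z (i1, i2, i3), 0 < z (star i1, i2, i3),
         0 < z (star i1, star i2, i3) & 0 < z (star i1, i2, star i3)]
  \/ [/\ 0 < z (i1, i2, i3), 0 < z (i1, star i2, i3),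
         0 < z (star i1, star i2, i3) & 0 < z (i1, star i2, star i3)]
  \/ [/\ 0 < z (i1, i2, i3), 0 < z (i1, i2, star i3),
         0 < z (star i1, i2, star i3) & 0 < z (i1, star i2, star i3)]) ->
  ~ is_move z.
Proof.
move=> [i1 [i2 [i3 pos]]] /(move_pattern_sums z i1 i2 i3) [sum1 sum2 sum3].
by case: pos => [[]|[[]|[]]]; lia.
Qed.
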